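(* Let $S_1 = A_3^*$ be the set of nonnegative integers whose base-$3$ expansion contains no digit $2$, and for $n\ge 2$ let $S_n$ be the set of positive integers $k$ such that every exponent in the prime factorization of $k$ (i.e. $v_p(k)$ for each prime $p\mid k$) lies in $S_{n-1}$. Then the asymptotic density $d(S_n)$ tends to $1$ as $n\to\infty$, but there is no $n$ for which $d(S_n)=1$.
   Context: Thus $S_2$ is the greedy geometric-progression-free set $G_3^*$ (Rankin's characterization). The asymptotic density of $A\subseteq\mathbb{N}$ is $d(A)=\lim_{N\to\infty}\frac{|A\cap\{1,\dots,N\}|}{N}$. *)

From Stdlib Require Import Reals.
From mathcomp Require Import all_boot.

Definition digit3 (m i : nat) : nat := (m %/ 3 ^ i) %% 3.

(* m has no digit 2 in base 3.  Digits at positions i >= m vanish since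
   3^i > m, so checking positions 0..m is the same as checking all positions
   (see noTwo3P). *)
Definition noTwo3 (m : nat) : bool :=
  all (fun i => digit3 m i != 2) (iota 0 m.+1).

Lemma noTwo3P (m : nat) : noTwo3 m = true <-> (forall i, digit3 m i <> 2).
Proof.
split.
- move=> /allP H i.
  case: (ltnP i m.+1) => Hi.
  + by apply/eqP; apply: H; rewrite mem_iota.
  + rewrite /digit3 divn_small //.
    by apply: (ltn_trans Hi); rewrite ltn_expl.

- move=> H; apply/allP => i _; apply/eqP; exact: H.
Qed.

(* Saux j = S_{j+1}:  Saux 0 = S_1 = A_3^*, and
   S_{n} = { k >= 1 | forall prime p | k, v_p(k) \in S_{n-1} }. *)
Fixpoint Saux (j : nat) (k : nat) : bool :=
  match j with
  | 0 => noTwo3 k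
  | j'.+1 => (0 < k) && all (fun p => Saux j' (logn p k)) (primes k)
  end.

(* S n = S_n for n >= 1 (S 0 is an irrelevant alias of S_1). *)
Definition S (n : nat) : nat -> bool := Saux n.-1.

Definition countUpTo (A : nat -> bool) (N : nat) : nat :=
  \sum_(1 <= k < N.+1) A k.

Definition has_density (A : nat -> bool) (d : R) : Prop :=
  Un_cv (fun N => Rdiv (INR (countUpTo A N)) (INR N)) d.

From Stdlib Require Import Reals Lra Lia.
From mathcomp Require Import all_boot zify.

(* S_1 has density 0: below 3^(t+1) at most 2^(t+1) integers avoid the digit 2.
   For n >= 2, membership in S_n depends on all p-adic valuations, but looking only
   at primes p < P and valuations truncated at P + 2 gives a periodic set containing
   S_n whose surplus consists of integers divisible by p^2 for some p >= P or by
   p^(P+2) for some p < P, hence has upper density O(1/P); so d(S_n) exists.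
   Since S_(n-1) contains 1, ..., n-1, every integer outside S_n is divisible by
   p^n for a prime p, which gives d(S_n) >= 1 - 2^(2-n). Finally some e > 0
   lies outside S_(n-1), and the integers with 2-adic valuation exactly e, a set of
   density 2^(-e-1), avoid S_n; so d(S_n) < 1. *)

Definition periodic (B : nat -> bool) (Q : nat) : Prop := forall k, B (k + Q) = B k.

Lemma countUpTo_subset (A B : nat -> bool) N :
  (forall k, 0 < k -> k <= N -> A k -> B k) -> countUpTo A N <= countUpTo B N.
Proof.
move=> AB; rewrite /countUpTo big_nat_cond [X in _ <= X]big_nat_cond.
apply: leq_sum => k /andP [/andP [k1 kN] _].
by case Ak: (A k); rewrite // (AB k).
Qed.

Lemma countUpTo_predC (A : nat -> bool) N :
  countUpTo A N + countUpTo (fun k => ~~ A k) N = N.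
Proof.
rewrite /countUpTo -big_split /= (eq_bigr (fun _ => 1)); last by move=> k _; case: (A k).
by rewrite sum_nat_const_nat muln1 subn1.
Qed.

Lemma countUpTo_leN A N : countUpTo A N <= N.
Proof.
apply: (leq_trans (leq_addr (countUpTo (fun k => ~~ A k) N) _)).
by rewrite countUpTo_predC.
Qed.

Lemma countUpTo_le_add (A B C : nat -> bool) N :
  (forall k, 0 < k -> k <= N -> A k <= B k + C k) ->
  countUpTo A N <= countUpTo B N + countUpTo C N.
Proof.
move=> H; rewrite /countUpTo -big_split /= big_nat_cond [X in _ <= X]big_nat_cond.
by apply: leq_sum => k /andP [/andP [k1 kN] _]; apply: H.
Qed.

Lemma countUpTo_gt0 (A : nat -> bool) N k : 0 < k -> k <= N -> A k -> 0 < countUpTo A N.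
Proof.
move=> k0 kN Ak; rewrite /countUpTo (bigD1_seq k) /= ?Ak //; last exact: iota_uniq.
by rewrite mem_index_iota k0 ltnS.
Qed.

Lemma countUpTo_dvdn d N : countUpTo (fun k => d %| k) N = N %/ d.
Proof.
rewrite /countUpTo; case: (posnP d) => [->|d0].
  rewrite divn0 big_nat_cond big1 // => k /andP [/andP [k1 _] _].
  by rewrite dvd0n; case: k k1.
elim: N => [|N IH]; first by rewrite big_geq // div0n.
by rewrite big_nat_recr //= IH divnS // addnC.
Qed.

Lemma countUpTo_le_sum_divn (A : nat -> bool) N a b (f : nat -> nat) :
  (forall k, 0 < k -> k <= N -> A k -> exists2 j, a <= j < b & f j %| k) ->
  countUpTo A N <= \sum_(a <= j < b) N %/ f j.
Proof.
move=> cover; rewrite (eq_bigr (fun j => countUpTo (fun k => f j %| k) N));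
  last by move=> j _; rewrite countUpTo_dvdn.
rewrite exchange_big /= /countUpTo big_nat_cond [X in _ <= X]big_nat_cond.
apply: leq_sum => k /andP [/andP [k1 kN] _].
case Ak: (A k) => //=; have [j jab dj] := cover k k1 kN Ak.
by rewrite (bigD1_seq j) /= ?dj ?mem_index_iota //; exact: iota_uniq.
Qed.

Lemma countUpTo_shift (B : nat -> bool) Q N : periodic B Q ->
  countUpTo B (Q + N) = countUpTo B Q + countUpTo B N.
Proof.
move=> perB; rewrite /countUpTo (big_cat_nat _ (n := Q.+1)) //=; last lia.
congr (_ + _); rewrite -addn1 addnC big_addn.
have -> : (Q + N).+1 - Q = N.+1 by lia.
by apply: eq_bigr => k _; rewrite perB.
Qed.

Lemma countUpTo_periodic (B : nat -> bool) Q N : periodic B Q ->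
  countUpTo B N = N %/ Q * countUpTo B Q + countUpTo B (N %% Q).
Proof.
move=> perB; rewrite {1}(divn_eq N Q).
elim: (N %/ Q) => [|q IH]; first by rewrite !mul0n add0n.
by rewrite mulSn -addnA countUpTo_shift // IH addnA.
Qed.

Lemma divn_sqr_add_le x j : 1 < j -> x %/ j ^ 2 + x %/ j <= x %/ j.-1.
Proof.
move=> j1; have j0 : 0 < j by lia.
have h1 : x %/ j ^ 2 * j <= x %/ j by rewrite leq_divRL // -mulnA mulnn leq_divM.
have h2 : x %/ j * j <= x by rewrite -leq_divRL.
rewrite leq_divRL; [nia | lia].
Qed.

(* [x %/ j^2 <= x %/ (j - 1) - x %/ j] makes the sum telescope. *)
Lemma sum_divn_sqr_le x a b : 1 < a -> \sum_(a <= j < b) x %/ j ^ 2 <= x %/ a.-1.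
Proof.
move=> a1; suff tele m : \sum_(a <= j < a + m) x %/ j ^ 2 + x %/ (a + m).-1 <= x %/ a.-1.
  case: (leqP b a) => ba; first by rewrite big_geq.
  by have := tele (b - a); rewrite subnKC ?(ltnW ba) // => /(leq_trans (leq_addr _ _)).
elim: m => [|m IH]; first by rewrite addn0 big_geq.
rewrite addnS big_nat_recr /=; last lia.
by apply: leq_trans IH; rewrite -addnA leq_add2l divn_sqr_add_le //; lia.
Qed.

Lemma sum_divn_expn_le x a b e : 1 < a -> 1 < e ->
  \sum_(a <= j < b) x %/ j ^ e <= x %/ 2 ^ (e - 2).
Proof.
move=> a1 e1.
apply: leq_trans (leq_trans (sum_divn_sqr_le (x %/ 2 ^ (e - 2)) a b a1) (leq_div _ _)).
rewrite big_nat_cond [X in _ <= X]big_nat_cond.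
apply: leq_sum => j /andP [/andP [aj _] _]; rewrite -divnMA.
apply: leq_div2l; first by rewrite muln_gt0 !expn_gt0; apply/andP; split; lia.
have -> : j ^ e = j ^ (e - 2) * j ^ 2 by rewrite -expnD subnK.
rewrite leq_mul2r; apply/orP; right.
by elim: (e - 2) => // n IH; rewrite !expnS leq_mul //; lia.
Qed.

Lemma digit3_mul3D m i d : d < 3 -> digit3 (m * 3 + d) i.+1 = digit3 m i.
Proof. by move=> d3; rewrite /digit3 expnS divnMA divnMDl // (divn_small d3) addn0. Qed.

Lemma noTwo3_mul3D m d : d < 3 -> noTwo3 (m * 3 + d) -> noTwo3 m && (d != 2).
Proof.
move=> d3 /noTwo3P noTwo; apply/andP; split.
  by apply/noTwo3P => i; rewrite -(digit3_mul3D m i _ d3).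
by apply/eqP; have := noTwo 0; rewrite /digit3 expn0 divn1 modnMDl modn_small.
Qed.

Lemma sum_noTwo3_mul3 m :
  \sum_(0 <= k < m * 3) noTwo3 k <= 2 * \sum_(0 <= k < m) noTwo3 k.
Proof.
elim: m => [|m IH]; first by rewrite !big_geq.
have -> : m.+1 * 3 = (m * 3 + 2).+1 by lia.
have -> : m * 3 + 2 = (m * 3 + 1).+1 by lia.
have -> : m * 3 + 1 = (m * 3).+1 by lia.
rewrite !big_nat_recr //=.
have last_digit d : d < 3 -> noTwo3 (m * 3 + d) <= noTwo3 m && (d != 2).
  by move=> d3; case h: (noTwo3 _); rewrite // (noTwo3_mul3D _ _ d3 h).
have := last_digit 0 isT; have := last_digit 1 isT; have := last_digit 2 isT.
rewrite addn0 addn1 addn2 /=; lia.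
Qed.

Lemma sum_noTwo3_exp3 t : \sum_(0 <= k < 3 ^ t) noTwo3 k <= 2 ^ t.
Proof.
elim: t => [|t IH]; first by rewrite expn0 big_nat1.
rewrite expnSr (expnSr 2); apply: leq_trans (sum_noTwo3_mul3 _) _.
by rewrite mulnC leq_mul2r IH orbT.
Qed.

Lemma countUpTo_noTwo3_le N : countUpTo noTwo3 N <= 2 ^ (trunc_log 3 N).+1.
Proof.
apply: leq_trans (sum_noTwo3_exp3 _).
rewrite (big_cat_nat _ (n := N.+1)) //=; last exact: trunc_log_ltn.
by apply: leq_trans (leq_addr _ _); rewrite big_ltn // /countUpTo leq_addl.
Qed.

Lemma Saux1 j : Saux j 1.
Proof. by case: j. Qed.

Lemma Saux_small j k : 0 < k -> k <= j.+1 -> Saux j k.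
Proof.
elim: j k => [|j IH] k k0 kj; first by have -> : k = 1 by lia.
rewrite /= k0; apply/allP => p pk; apply: IH; first by rewrite logn_gt0.
by have := ltn_logl p k0; lia.
Qed.

Lemma exists_notin_Saux j : exists2 e, 0 < e & ~~ Saux j e.
Proof.
elim: j => [|j [e e0 notSe]]; first by exists 2.
exists (2 ^ e); first by rewrite expn_gt0.
by rewrite /= expn_gt0 primesX // primes_prime //= pfactorK // andbT.
Qed.

Lemma notSaux_pfactor_dvdn j k : 0 < k -> ~~ Saux j.+1 k ->
  exists p, [/\ prime p, p %| k, 1 < logn p k & ~~ Saux j (logn p k)].
Proof.
rewrite /= => k0; rewrite k0 => /allPn [p pk notS].
move: pk; rewrite mem_primes => /and3P [pp _ pk]; exists p; split => //.
have v0 : 0 < logn p k by rewrite logn_gt0 mem_primes pp k0 pk.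
have v1 : logn p k != 1 by apply: contraNneq notS => ->; rewrite Saux1.
lia.
Qed.

Lemma count_iota_leq L M : count (fun i => i <= L) (iota 1 M) = minn L M.
Proof.
elim: M => [|M IH]; first by rewrite minn0.
rewrite -[M.+1]addn1 iotaD count_cat IH /=.
by case: (leqP (1 + M) L) => h; rewrite ?h /=; lia.
Qed.

Section PeriodicModel.
Variables (j P : nat).

Let M := P + 2.

(* [min (logn p k) M], computed by divisibility so that it is periodic in [k]. *)
Definition vtrunc p k := count (fun i => p ^ i %| k) (iota 1 M).

Definition admissible_exp e := (e == 0) || (M <= e) || Saux j e.

Definition Smodel k := all (fun p => prime p ==> admissible_exp (vtrunc p k)) (iota 0 P).

Definition model_period := P`! ^ M.

Lemma vtrunc_min p k : prime p -> 0 < k -> vtrunc p k = minn (logn p k) M.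
Proof.
move=> pp k0; rewrite /vtrunc -count_iota_leq; apply: eq_in_count => i _.
by rewrite pfactor_dvdn.
Qed.

Lemma model_period_gt0 : 0 < model_period.
Proof. by rewrite expn_gt0 fact_gt0. Qed.

Lemma Smodel_periodic : periodic Smodel model_period.
Proof.
move=> k; apply: eq_in_all => p; rewrite mem_iota => /andP [_ pP].
case: (boolP (prime p)) => //= pp; congr admissible_exp.
apply: eq_in_count => i; rewrite mem_iota => /andP [i1 iM].
rewrite addnC dvdn_addr //; apply: (@dvdn_trans (P`! ^ i)).
  by apply: dvdn_exp2r; apply: dvdn_fact; rewrite prime_gt0 //= ltnW.
by apply: dvdn_exp2l; lia.
Qed.

Lemma Saux_Smodel k : 0 < k -> Saux j.+1 k -> Smodel k.
Proof.
rewrite /= => k0; rewrite k0 => /allP Sk.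
apply/allP => p _; apply/implyP => pp; rewrite /admissible_exp vtrunc_min //.
case: (posnP (logn p k)) => [->|v0]; first by rewrite min0n.
case: (leqP M (logn p k)) => vM; first by rewrite leqnn orbT.
by rewrite Sk ?orbT // -logn_gt0.
Qed.

Lemma Smodel_notSaux k : 0 < k -> Smodel k -> ~~ Saux j.+1 k ->
  (exists2 p, 1 < p < P & p ^ M %| k) \/ (exists2 p, P <= p < k.+1 & p ^ 2 %| k).
Proof.
move=> k0 Mk /(notSaux_pfactor_dvdn _ _ k0) [p [pp pk v1 notS]].
have p1 := prime_gt1 pp; have pk' := dvdn_leq k0 pk.
case: (ltnP p P) => pP; last by right; exists p; rewrite ?pfactor_dvdn ?pP //; lia.
left; exists p; first by rewrite p1.
move/allP: Mk => /(_ p); rewrite mem_iota pP pp /admissible_exp vtrunc_min //.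
case: (leqP M (logn p k)) => [vM _|vM]; first by rewrite pfactor_dvdn.
by rewrite (negbTE notS) orbF => /(_ isT) /orP [/eqP|]; lia.
Qed.

Lemma countUpTo_Smodel_notSaux N : 1 < P ->
  countUpTo (fun k => Smodel k && ~~ Saux j.+1 k) N <= N %/ 2 ^ P + N %/ P.-1.
Proof.
move=> P_gt1.
set X := fun k => has (fun p => p ^ M %| k) (index_iota 2 P).
set Y := fun k => has (fun p => p ^ 2 %| k) (index_iota P N.+1).
apply: leq_trans (@countUpTo_le_add _ X Y N _) _.
  move=> k k0 kN; case Mk: (Smodel k) => //; case Sk: (Saux j.+1 k) => //=.
  case: (Smodel_notSaux _ k0 Mk (negbT Sk)) => [[p pP pk]|[p pP pk]].
    by suff -> : X k by []; apply/hasP; exists p; rewrite ?mem_index_iota.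
  suff -> : Y k by rewrite addn1.
  by apply/hasP; exists p; rewrite // mem_index_iota; lia.
apply: leq_add.
  apply: leq_trans (countUpTo_le_sum_divn X N 2 P (fun p => p ^ M) _) _.
    by move=> k _ _ /hasP [p]; rewrite mem_index_iota; exists p.
  by have := sum_divn_expn_le N 2 P M isT; rewrite /M addnK; apply; lia.
apply: leq_trans (countUpTo_le_sum_divn Y N P N.+1 (fun p => p ^ 2) _) _.
  by move=> k _ _ /hasP [p]; rewrite mem_index_iota; exists p.
exact: sum_divn_sqr_le.
Qed.

End PeriodicModel.

Lemma countUpTo_notSaux_le i N :
  countUpTo (fun k => ~~ Saux i.+1 k) N <= N %/ 2 ^ i.
Proof.
apply: leq_trans (countUpTo_le_sum_divn _ N 2 N.+1 (fun p => p ^ (i + 2)) _) _.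
  move=> k k0 kN /(notSaux_pfactor_dvdn _ _ k0) [p [pp pk _ notS]].
  exists p; first by have := dvdn_leq k0 pk; have := prime_gt1 pp; lia.
  rewrite pfactor_dvdn //; case: (leqP (i + 2) (logn p k)) => // vi.
  by move: notS; rewrite Saux_small // ?logn_gt0 ?mem_primes ?pp ?k0 ?pk //; lia.
by have := sum_divn_expn_le N 2 N.+1 (i + 2) isT; rewrite addnK; apply; lia.
Qed.

Lemma countUpTo_Smodel_le j K N : 0 < K ->
  countUpTo (Smodel j K.+1) N <= countUpTo (Saux j.+1) N + 2 * (N %/ K).
Proof.
move=> K0; apply: leq_trans (countUpTo_le_add _ (Saux j.+1)
  (fun k => Smodel j K.+1 k && ~~ Saux j.+1 k) N _) _.
  by move=> k _ _; case: (Smodel _ _ k); case: (Saux _ k).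
rewrite leq_add2l; apply: leq_trans (countUpTo_Smodel_notSaux j K.+1 N _) _ => //.
rewrite mul2n -addnn leq_add2r leq_div2l //.
by apply: leq_trans (ltnW (ltn_expl K (isT : 1 < 2))) _; rewrite leq_exp2l.
Qed.

Lemma countUpTo_notSaux_ge i e N : 0 < e -> ~~ Saux i e ->
  N %/ 2 ^ e.+1 <= countUpTo (fun k => ~~ Saux i.+1 k) N.
Proof.
move=> e0 notSe; set Q := 2 ^ e.+1.
set C := fun k => (2 ^ e %| k) && ~~ (2 ^ e.+1 %| k).
have perC : periodic C Q by move=> k; rewrite /C addnC !dvdn_addr // dvdn_exp2l.
have C_gt0 : 0 < countUpTo C Q.
  have e2 : 0 < 2 ^ e by rewrite expn_gt0.
  apply: (countUpTo_gt0 _ _ (2 ^ e)) => //; first by rewrite leq_exp2l.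
  by rewrite /C dvdnn /= dvdn_Pexp2l // ltnn.
apply: leq_trans (countUpTo_subset C _ N _).
  rewrite (countUpTo_periodic _ _ N perC).
  by apply: leq_trans (leq_addr _ _); rewrite leq_pmulr.
move=> k k0 _ /andP [dk ndk]; apply: contraNN notSe => /= /andP [_ /allP Sk].
have v2 : logn 2 k = e by move: dk ndk; rewrite !pfactor_dvdn //; lia.
by rewrite -v2 Sk // -logn_gt0 v2.
Qed.

Lemma leq_double_divn_mul N Q : 0 < Q -> 2 * Q <= N -> N <= 2 * (N %/ Q * Q).
Proof.
move=> Q0 QN; have := ltn_pmod N Q0; have := divn_eq N Q.
set q := N %/ Q; set r := N %% Q => eN lt_r.
have q2 : 1 < q by rewrite -(ltn_pmul2r Q0); lia.
nia.
Qed.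

Local Open Scope R_scope.

Lemma INR_leq m n : (m <= n)%N -> INR m <= INR n.
Proof. by move/leP; apply: le_INR. Qed.

Lemma INR_ltn m n : (m < n)%N -> INR m < INR n.
Proof. by move/ltP; apply: lt_INR. Qed.

Lemma INR_gt0 n : (0 < n)%N -> 0 < INR n.
Proof. exact: INR_ltn. Qed.

(* [plus_INR] and [mult_INR] are stated for [Nat.add] and [Nat.mul], so they do not
   rewrite the ssrnat operations [addn] and [muln]. *)
Lemma INR_addn m n : INR (m + n) = INR m + INR n.
Proof. exact: plus_INR. Qed.

Lemma INR_muln m n : INR (m * n) = INR m * INR n.
Proof. exact: mult_INR. Qed.

Lemma INR_expn m n : INR (m ^ n) = INR m ^ n.
Proof. by elim: n => [|n IH]; rewrite ?expn0 // expnS INR_muln IH. Qed.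

Lemma INR_divn_mul_le N K : (0 < K)%N -> INR (N %/ K) * INR K <= INR N.
Proof. by move=> K0; rewrite -INR_muln; apply: INR_leq; apply: leq_divM. Qed.

Definition ratio (A : nat -> bool) (N : nat) : R := INR (countUpTo A N) / INR N.

Lemma ratio_mul A N : (0 < N)%N -> ratio A N * INR N = INR (countUpTo A N).
Proof. by move=> /INR_gt0 N0; rewrite /ratio; field; lra. Qed.

Lemma ratio_le A N c : (0 < N)%N -> INR (countUpTo A N) <= c * INR N -> ratio A N <= c.
Proof.
move=> N0; rewrite -(ratio_mul A _ N0) => le_c.
by apply: (Rmult_le_reg_r (INR N)) => //; apply: INR_gt0.
Qed.

Lemma ratio_ge A N c : (0 < N)%N -> c * INR N <= INR (countUpTo A N) -> c <= ratio A N.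
Proof.
move=> N0; rewrite -(ratio_mul A _ N0) => ge_c.
by apply: (Rmult_le_reg_r (INR N)) => //; apply: INR_gt0.
Qed.

Lemma ratio_le1 A N : ratio A N <= 1.
Proof.
case: (posnP N) => [->|N0]; first by rewrite /ratio Rdiv_0_r; lra.
by apply: ratio_le => //; rewrite Rmult_1_l; apply/INR_leq/countUpTo_leN.
Qed.

Lemma Un_cv_le_eventually (u : nat -> R) l b N0 :
  Un_cv u l -> (forall N, (N0 <= N)%N -> u N <= b) -> l <= b.
Proof.
move=> cvu ub; apply: Rnot_lt_le => lt_bl.
have [N1 near] := cvu (l - b) ltac:(lra).
have := near (maxn N0 N1) ltac:(apply/leP; exact: leq_maxr).
have := ub (maxn N0 N1) (leq_maxl _ _).
by rewrite /R_dist => ? /Rabs_def2; lra.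
Qed.

Lemma Un_cv_ge_eventually (u : nat -> R) l b N0 :
  Un_cv u l -> (forall N, (N0 <= N)%N -> b <= u N) -> b <= l.
Proof.
move=> cvu lb; rewrite -(Ropp_involutive l) -(Ropp_involutive b).
apply/Ropp_le_contravar/(Un_cv_le_eventually (fun N => - u N) _ _ N0).
  by move=> e /cvu [N1 near]; exists N1 => n /near; rewrite /R_dist -Rabs_Ropp; 
     congr (Rabs _ < _); ring.
by move=> N /lb; lra.
Qed.

Lemma density_le A l c N0 : (0 < N0)%N -> has_density A l ->
  (forall N, (N0 <= N)%N -> INR (countUpTo A N) <= c * INR N) -> l <= c.
Proof.
move=> N00 dA ub; apply: (Un_cv_le_eventually _ _ _ N0 dA) => N N0N.
by apply: ratio_le; [apply: leq_trans N0N | apply: ub].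
Qed.

Lemma density_ge A l c N0 : (0 < N0)%N -> has_density A l ->
  (forall N, (N0 <= N)%N -> c * INR N <= INR (countUpTo A N)) -> c <= l.
Proof.
move=> N00 dA lb; apply: (Un_cv_ge_eventually _ _ _ N0 dA) => N N0N.
by apply: ratio_ge; [apply: leq_trans N0N | apply: lb].
Qed.

Lemma density_le1 A l : has_density A l -> l <= 1.
Proof. by move=> dA; apply: (Un_cv_le_eventually _ _ _ 0 dA) => N _; apply: ratio_le1. Qed.

Lemma div_lt_of_div_lt a x eps : 0 < a -> 0 < eps -> a / eps < x -> a / x < eps.
Proof.
move=> a0 e0 lt_x; have x0 : 0 < x by apply: Rlt_trans lt_x; apply: Rdiv_lt_0_compat.
apply: (Rmult_lt_reg_r x) => //; have -> : a / x * x = a by field; lra.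
have := Rmult_lt_compat_r eps _ _ e0 lt_x.
have -> : a / eps * eps = a by field; lra.
lra.
Qed.

(* Cut [1, N] into [N %/ Q] full periods and a remainder shorter than [Q]. *)
Lemma countUpTo_periodic_near B Q N : (0 < Q)%N -> periodic B Q ->
  INR N * (INR (countUpTo B Q) / INR Q) - INR Q <= INR (countUpTo B N) <=
  INR N * (INR (countUpTo B Q) / INR Q) + INR Q.
Proof.
move=> Q0 perB; have hQ := INR_gt0 _ Q0.
have eN : INR N = INR (N %/ Q) * INR Q + INR (N %% Q).
  by rewrite -INR_muln -INR_addn -divn_eq.
rewrite (countUpTo_periodic _ _ N perB) INR_addn INR_muln eN.
set q := INR (N %/ Q); set c := INR (countUpTo B Q); set r := INR (N %% Q).
set r' := INR (countUpTo B (N %% Q)).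
have hr : r < INR Q by apply: INR_ltn; apply: ltn_pmod.
have hr' : r' <= r by apply/INR_leq/countUpTo_leN.
have hc : c <= INR Q by apply/INR_leq/countUpTo_leN.
have hc0 : 0 <= c by apply: pos_INR.
have hr'0 : 0 <= r' by apply: pos_INR.
have -> : (q * INR Q + r) * (c / INR Q) = q * c + r * (c / INR Q) by field; lra.
have ht : c / INR Q * INR Q = c by field; lra.
set t := c / INR Q in ht *.
have t0 : 0 <= t by nra.
have t1 : t <= 1 by nra.
split; nra.
Qed.

Lemma ratio_near_periodic A B Q K N : (0 < Q)%N -> (0 < K)%N -> (0 < N)%N -> periodic B Q ->
  (countUpTo A N <= countUpTo B N <= countUpTo A N + 2 * (N %/ K))%N ->
  Rabs (ratio A N - INR (countUpTo B Q) / INR Q) <= 2 / INR K + INR Q / INR N.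
Proof.
move=> Q0 K0 N0 perB /andP [/INR_leq le_ab /INR_leq le_ba].
have [near_lo near_hi] := countUpTo_periodic_near _ _ N Q0 perB.
have hw := INR_divn_mul_le N _ K0.
rewrite INR_addn INR_muln in le_ba.
have hn := INR_gt0 _ N0; have hK := INR_gt0 _ K0.
set c := INR (countUpTo B Q) / INR Q in near_lo near_hi *.
set a := INR (countUpTo A N) in le_ab le_ba *.
set w := INR (N %/ K) in hw le_ba.
have hw' : w <= INR N / INR K.
  apply: (Rmult_le_reg_r (INR K)) => //.
  by have -> : INR N / INR K * INR K = INR N by field; lra.
rewrite /ratio -/a.
have -> : a / INR N - c = (a - INR N * c) * / INR N by field; lra.
have -> : 2 / INR K + INR Q / INR N = (2 * (INR N / INR K) + INR Q) * / INR N
  by field; lra.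
rewrite Rabs_mult Rabs_inv (Rabs_pos_eq (INR N)); last lra.
apply: Rmult_le_compat_r; first by left; apply: Rinv_0_lt_compat.
by apply: Rabs_le; simpl INR in le_ba; lra.
Qed.

Lemma density_of_periodic_approx (A : nat -> bool) :
  (forall K, (0 < K)%N -> exists B Q, [/\ (0 < Q)%N, periodic B Q &
     forall N, (countUpTo A N <= countUpTo B N <= countUpTo A N + 2 * (N %/ K))%N]) ->
  {l | has_density A l}.
Proof.
move=> approx; apply: R_complete => eps eps0.
have eps4 : 0 < eps / 4 by lra.
have [K K_big] := INR_unbounded (2 / (eps / 4)).
have K0 : (0 < K)%N.
  by case: K K_big => //= /Rlt_not_le[]; left; apply: Rdiv_lt_0_compat; lra.
have [B [Q [Q0 perB near]]] := approx K K0.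
have [N0 N0_big] := INR_unbounded (INR Q / (eps / 4)).
have hQ := INR_gt0 _ Q0.
have N00 : (0 < N0)%N.
  by case: N0 N0_big => //= /Rlt_not_le[]; left; apply: Rdiv_lt_0_compat.
have close n : (N0 <= n)%coq_nat -> Rabs (ratio A n - INR (countUpTo B Q) / INR Q) < eps / 2.
  move=> /leP N0n; have n0 : (0 < n)%N by apply: leq_trans N0n.
  apply: Rle_lt_trans (ratio_near_periodic A B Q K n Q0 K0 n0 perB (near n)) _.
  have lt_K := div_lt_of_div_lt _ _ _ Rlt_0_2 eps4 K_big.
  have lt_n : INR Q / INR n < eps / 4.
    apply: div_lt_of_div_lt => //; apply: Rlt_le_trans N0_big _; exact: INR_leq.
  lra.
exists N0 => n m /close near_n /close near_m; rewrite /R_dist.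
set c := INR (countUpTo B Q) / INR Q in near_n near_m.
have -> : ratio A n - ratio A m = (ratio A n - c) - (ratio A m - c) by ring.
by apply: Rle_lt_trans (Rabs_triang _ _) _; rewrite Rabs_Ropp; lra.
Qed.

Lemma ratio_noTwo3_le N : (0 < N)%N -> ratio noTwo3 N <= 2 * (2 / 3) ^ trunc_log 3 N.
Proof.
move=> N0; apply: ratio_le => //; set t := trunc_log 3 N.
have le3 := INR_leq _ _ (trunc_logP (isT : (1 < 3)%N) N0).
have le2 := INR_leq _ _ (countUpTo_noTwo3_le N).
rewrite !INR_expn -/t /= in le3 le2.
replace (1 + 1 + 1) with 3 in le3 by ring; replace (1 + 1) with 2 in le2 by ring.
have e23 : (2 / 3) ^ t * 3 ^ t = 2 ^ t by rewrite -Rpow_mult_distr; congr (_ ^ _); field.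
have := Rmult_le_compat_l (2 * (2 / 3) ^ t) _ _ _ le3.
have : 0 <= (2 / 3) ^ t by apply: pow_le; lra.
nra.
Qed.

Lemma density_S1 : has_density (S 1) 0.
Proof.
move=> eps eps0.
have [T small] := pow_lt_1_zero (2 / 3) ltac:(rewrite Rabs_pos_eq; lra) (eps / 2) ltac:(lra).
exists (3 ^ T)%N => N /leP TN; have N0 : (0 < N)%N by apply: leq_trans TN; rewrite expn_gt0.
rewrite /R_dist Rminus_0_r Rabs_pos_eq; last by apply: ratio_ge => //; rewrite Rmult_0_l; apply: pos_INR.
apply: Rle_lt_trans (ratio_noTwo3_le N N0) _.
have := small (trunc_log 3 N) (elimT leP (trunc_log_max (isT : (1 < 3)%N) TN)).
rewrite Rabs_pos_eq; [lra | apply: pow_le; lra].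
Qed.

Lemma density_Saux_exists j : {l | has_density (Saux j.+1) l}.
Proof.
apply: density_of_periodic_approx => K K0.
exists (Smodel j K.+1), (model_period K.+1); split.
- exact: model_period_gt0.
- exact: Smodel_periodic.
- move=> N; rewrite countUpTo_Smodel_le // andbT.
  by apply: countUpTo_subset => k k0 _; apply: Saux_Smodel.
Qed.

Lemma density_Saux_ge i l : has_density (Saux i.+1) l -> 1 - (1 / 2) ^ i <= l.
Proof.
move=> dS; apply: (density_ge _ _ _ 1 isT dS) => N _.
have split_N := f_equal INR (countUpTo_predC (Saux i.+1) N).
have le_compl := INR_leq _ _ (countUpTo_notSaux_le i N).
have le_div := INR_divn_mul_le N _ (expn_gt0 2 i).
rewrite INR_addn in split_N; rewrite INR_expn /= in le_div.
have half_i : (1 / 2) ^ i * (1 + 1) ^ i = 1.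
  by rewrite -Rpow_mult_distr; replace (1 / 2 * (1 + 1)) with 1 by field; apply: pow1.
have h0 : 0 <= (1 / 2) ^ i by apply: pow_le; lra.
have := Rmult_le_compat_l _ _ _ h0 le_div.
rewrite (_ : _ * (_ * _) = INR (N %/ 2 ^ i) * ((1 / 2) ^ i * (1 + 1) ^ i)); last by ring.
rewrite half_i; lra.
Qed.

Lemma density_Saux_lt1 i l : has_density (Saux i.+1) l -> l < 1.
Proof.
move=> dS; have [e e0 notSe] := exists_notin_Saux i; set Q := (2 ^ e.+1)%N.
have Q0 : (0 < Q)%N by rewrite expn_gt0.
have hQ := INR_gt0 _ Q0.
suff : l <= 1 - / (2 * INR Q) by have := Rinv_0_lt_compat (2 * INR Q); lra.
apply: (density_le _ _ _ (2 * Q) ltac:(by rewrite muln_gt0 Q0) dS) => N QN.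
have split_N := f_equal INR (countUpTo_predC (Saux i.+1) N).
have ge_compl : INR (N %/ Q) <= _ := INR_leq _ _ (countUpTo_notSaux_ge i e N e0 notSe).
have le_N := INR_leq _ _ (leq_double_divn_mul N Q Q0 QN).
rewrite INR_addn in split_N; rewrite !INR_muln /= in le_N.
have hinv : / (2 * INR Q) * (2 * INR Q) = 1 by field; lra.
have h0 : 0 <= / (2 * INR Q) by left; apply: Rinv_0_lt_compat; lra.
have := Rmult_le_compat_l _ _ _ h0 le_N.
rewrite (_ : _ * (_ * _) = INR (N %/ Q) * (/ (2 * INR Q) * (2 * INR Q))); last by ring.
rewrite hinv; lra.
Qed.

Lemma Un_cv_1_of_bounds (u : nat -> R) :
  (forall j, 1 - (1 / 2) ^ j <= u j.+2 <= 1) -> Un_cv u 1.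
Proof.
move=> bounds eps eps0.
have [T small] := pow_lt_1_zero (1 / 2) ltac:(rewrite Rabs_pos_eq; lra) eps eps0.
exists T.+2 => -[|[|j]] /leP //= Tj.
have := small j ltac:(apply/leP; lia); have := bounds j.
rewrite /R_dist Rabs_minus_sym => bj; rewrite !Rabs_pos_eq; [lra | lra | apply: pow_le; lra].
Qed.

Local Close Scope R_scope.

Theorem mainTheorem8 :
  exists d : nat -> R,
    (forall n : nat, 1 <= n -> has_density (S n) (d n)) /\
    Un_cv d R1 /\
    (forall n : nat, 1 <= n -> d n <> R1).
Proof.
pose d n : R := if n is j.+2 then sval (density_Saux_exists j) else R0.
have dS n : 1 <= n -> has_density (S n) (d n).
  by case: n => [|[|j]] // _; [exact: density_S1 | exact: svalP].
exists d; split => //; split.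
- apply: Un_cv_1_of_bounds => j; have dj := dS j.+2 isT.
  by split; [apply: density_Saux_ge dj | apply: density_le1 dj].
- case=> [|[|j]] // _; first by rewrite /d => /esym/R1_neq_R0.
  by have := density_Saux_lt1 _ _ (dS j.+2 isT); lra.
Qed.
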